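(* Let $\mathbf{k}$ be a field, $p\ge3$ an integer, and let $\varphi:\mathbf{k}[e_1,\dots,e_{2p}]\to\mathbf{k}[u_1,\dots,u_p,\alpha]$ be the $\mathbf{k}$-algebra homomorphism with $\varphi(e_i)=u_i$ for $1\le i\le p-1$, $\varphi(e_p)=u_p+\alpha$, and $\varphi(e_i)=u_{i-p}\alpha$ for $p+1\le i\le 2p$. Let $\mathcal{A}=\operatorname{Im}(\varphi)$. Then for each $1\le i\le p-1$ and each $j\ge1$, the monomial $u_i\alpha^j$ lies in $\mathcal{A}$ (and hence in the initial algebra $\mathrm{in}(\mathcal{A})$ with respect to any monomial order).
   Context: For a monomial order on $\mathbf{k}[u_1,\dots,u_p,\alpha]$, the initial algebra $\mathrm{in}(\mathcal{A})$ is the $\mathbf{k}$-span of the leading monomials of the nonzero elements of $\mathcal{A}$. *)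

From HB Require Import structures.
From mathcomp Require Import all_boot all_algebra.
From mathcomp Require Import mpoly.
Set Implicit Arguments. Unset Strict Implicit. Unset Printing Implicit Defensive.
Import GRing.Theory.
Local Open Scope ring_scope.

(* Target ring k[u_1,...,u_p, alpha] = {mpoly F[p.+1]}:
   variable u_i (1 <= i <= p) is the variable of index i-1,
   alpha is the variable of index p (ord_max). *)
Definition uvar (F : fieldType) (p : nat) (i : nat) : {mpoly F[p.+1]} :=
  'X_(inord i.-1).
Definition alphavar (F : fieldType) (p : nat) : {mpoly F[p.+1]} :=
  'X_(@ord_max p).

Definition phi_e (F : fieldType) (p : nat) (i : nat) : {mpoly F[p.+1]} :=
  if (i < p)%N then uvar F p i
  else if (i == p)%N then uvar F p p + alphavar F p
  else uvar F p (i - p)%N * alphavar F p.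

(* The k-algebra homomorphism phi : k[e_1..e_2p] -> k[u_1..u_p,alpha],
   e_i (variable of index i-1) |-> phi_e i. *)
Definition phi (F : fieldType) (p : nat) (q : {mpoly F[2 * p]}) : {mpoly F[p.+1]} :=
  comp_mpoly [tuple phi_e F p i.+1 | i < 2 * p] q.

Definition in_image_phi (F : fieldType) (p : nat) (f : {mpoly F[p.+1]}) : Prop :=
  exists q : {mpoly F[2 * p]}, phi q = f.

(** The image of [phi] is a subring containing [u_i], [u_i alpha],
    [u_p + alpha] and [u_p alpha].  Since [u_p] and [alpha] are the roots of
    [T^2 - (u_p + alpha) T + u_p alpha], the powers of [alpha] satisfy
    [alpha^(n+2) = (u_p + alpha) alpha^(n+1) - u_p alpha alpha^n], so by
    induction every [u_i alpha^n] lies in the image. *)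

From HB Require Import structures.
From mathcomp Require Import all_boot all_algebra.
From mathcomp Require Import mpoly.
From mathcomp Require Import ring zify.
Import GRing.Theory.
Local Open Scope ring_scope.

Section PowerRecurrence.

Variables (R : comPzRingType) (S : R -> Prop).
Hypothesis S_mul : forall x y, S x -> S y -> S (x * y).
Hypothesis S_sub : forall x y, S x -> S y -> S (x - y).

Lemma closed_mul_exp (a b x : R) :
  S (a + b) -> S (a * b) -> S x -> S (x * b) -> forall n, S (x * b ^+ n).
Proof.
move=> Sab Sa_b Sx Sxb.
have step n : S (x * b ^+ n) /\ S (x * b ^+ n.+1).
  elim: n => [|n [IHn IHn1]]; first by rewrite mulr1.
  split=> //.
  have -> : x * b ^+ n.+2 = x * b ^+ n.+1 * (a + b) - x * b ^+ n * (a * b).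
    by rewrite !exprS; ring.
  by apply: S_sub; apply: S_mul.
by move=> n; case: (step n).
Qed.

End PowerRecurrence.

Section ImagePhi.

Variables (F : fieldType) (p : nat).

Lemma in_image_phiM (f g : {mpoly F[p.+1]}) :
  in_image_phi f -> in_image_phi g -> in_image_phi (f * g).
Proof. by move=> [q <-] [r <-]; exists (q * r); rewrite /phi rmorphM. Qed.

Lemma in_image_phiB (f g : {mpoly F[p.+1]}) :
  in_image_phi f -> in_image_phi g -> in_image_phi (f - g).
Proof. by move=> [q <-] [r <-]; exists (q - r); rewrite /phi comp_mpolyB. Qed.

Lemma in_image_phi_e (k : nat) :
  (0 < k <= 2 * p)%N -> in_image_phi (phi_e F p k).
Proof.
case: k => // k /= lt_k; exists 'X_(Ordinal lt_k).
by rewrite /phi comp_mpolyXU -tnth_nth tnth_mktuple.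
Qed.

Lemma phi_e_lt (k : nat) : (k < p)%N -> phi_e F p k = uvar F p k.
Proof. by rewrite /phi_e => ->. Qed.

Lemma phi_e_id : phi_e F p p = uvar F p p + alphavar F p.
Proof. by rewrite /phi_e ltnn eqxx. Qed.

Lemma phi_e_addn (k : nat) : (0 < k)%N ->
  phi_e F p (p + k) = uvar F p k * alphavar F p.
Proof.
move=> k_gt0; rewrite /phi_e addKn.
have -> : (p + k < p)%N = false by lia.
by have -> : (p + k == p)%N = false by lia.
Qed.

End ImagePhi.

Theorem lemma6p3 (F : fieldType) (p : nat) (hp : (3 <= p)%N) (i j : nat)
  (hi1 : (1 <= i)%N) (hi2 : (i <= p - 1)%N) (hj : (1 <= j)%N) :
  in_image_phi (uvar F p i * alphavar F p ^+ j).
Proof.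
apply: (@closed_mul_exp _ _ (@in_image_phiM F p) (@in_image_phiB F p)
         (uvar F p p)).
- rewrite -phi_e_id; apply: in_image_phi_e; lia.
- rewrite -[_ * _]phi_e_addn; last lia.
  apply: in_image_phi_e; lia.
- rewrite -phi_e_lt; last lia.
  apply: in_image_phi_e; lia.
- rewrite -phi_e_addn //; apply: in_image_phi_e; lia.
Qed.
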